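(* Let ${\mathbb E}$, ${\mathbb W}$ be finite-dimensional Euclidean spaces, ${\mathcal A}:{\mathbb E}\to{\mathbb W}$ linear, $L={\mathcal A}^*({\mathbb W})\subseteq{\mathbb E}$, $\mathcal{K}\subseteq{\mathbb E}$ a convex cone and $C\in{\mathbb E}$, and suppose ${\mathcal F}=\{Z\in\mathcal{K}: Z=C-{\mathcal A}^*y \text{ for some } y\in{\mathbb W}\}\ne\emptyset$. Let $P$ denote the orthogonal projection of ${\mathbb E}$ onto $L^\perp$ (so that $P(\mathcal{K})$ is the quotient cone $\mathcal{K}/L$ and $P(C)$ represents $C/L$). Then the singularity degree of the system ${\mathcal F}$ over $\mathcal{K}$ equals the singularity degree of $\operatorname{face}(P(C),P(\mathcal{K}))$ over $P(\mathcal{K})$. Moreover, if ${\mathcal M}:{\mathbb E}\to{\mathbb F}$ is a surjective linear map with $\operatorname{Null}({\mathcal M})=L$ and $b={\mathcal M}(C)$, then ${\mathcal M}$ induces an isomorphism of the cones $\mathcal{K}/L$ and ${\mathcal M}(\mathcal{K})$, and this singularity degree also equals the singularity degree of the system $\{X\in\mathcal{K}:{\mathcal M}(X)=b\}$.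
   Context: Singularity degree of a system $\{X\in\mathcal{K}:{\mathcal M}(X)=b\}$: the minimum number $k$ of facial reduction steps ${\mathcal F}_0=\mathcal{K}$, ${\mathcal F}_{i+1}={\mathcal F}_i\cap({\mathcal M}^*v_i)^\perp$ with ${\mathcal M}^*v_i\in{\mathcal F}_i^*\setminus{\mathcal F}_i^\perp$, $\langle v_i,b\rangle=0$, reaching the smallest face of $\mathcal{K}$ containing the feasible set. For the nullspace-form system $\{Z\in\mathcal{K}:Z\in C+L\}$ the steps use exposing vectors $W_i\in{\mathcal F}_i^*\setminus{\mathcal F}_i^\perp$ with $W_i\in L^\perp$ and $\langle W_i,C\rangle=0$, reaching the smallest face of $\mathcal{K}$ containing the feasible set. Singularity degree of a face $G_t$ of a cone $G$: minimum number $d$ of steps $G_0=G$, $G_{i+1}=G_i\cap d_i^\perp$, $d_i\in G_i^*\setminus G_i^\perp$, $d_i\perp G_t$, with $G_d=G_t$. $\operatorname{face}(x,G)$ is the smallest face of $G$ containing $x$. *)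

(* Euclidean spaces E, W, F are modelled as row-vector spaces
   'rV[R]_n with the standard inner product (every finite-dimensional Euclidean
   space is isometric to such a space); linear maps are matrices acting on the
   right (x |-> x *m A), adjoints are given by the transpose. *)
From HB Require Import structures.
From mathcomp Require Import all_boot all_order all_algebra.
From mathcomp Require Import reals.
Set Implicit Arguments. Unset Strict Implicit. Unset Printing Implicit Defensive.
Import Order.TTheory GRing.Theory Num.Theory.
Local Open Scope ring_scope.

Section FR.
Variable R : realType.

Definition dot (n : nat) (x y : 'rV[R]_n) : R := \sum_(i < n) x ord0 i * y ord0 i.

Definition seteq (n : nat) (S T : 'rV[R]_n -> Prop) : Prop := forall x, S x <-> T x.

Definition subset_of (n : nat) (S T : 'rV[R]_n -> Prop) : Prop := forall x, S x -> T x.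

Definition img (n p : nat) (f : 'rV[R]_n -> 'rV[R]_p) (S : 'rV[R]_n -> Prop)
  : 'rV[R]_p -> Prop := fun y => exists x, S x /\ y = f x.

Definition convex_cone (n : nat) (K : 'rV[R]_n -> Prop) : Prop :=
  K 0 /\ (forall x y, K x -> K y -> K (x + y)) /\
  (forall (t : R) x, 0 <= t -> K x -> K (t *: x)).

Definition is_face (n : nat) (K F : 'rV[R]_n -> Prop) : Prop :=
  subset_of F K /\ convex_cone F /\
  (forall x y, K x -> K y -> F (x + y) -> F x /\ F y).

Definition min_face (n : nat) (K S : 'rV[R]_n -> Prop) : 'rV[R]_n -> Prop :=
  fun x => K x /\ forall F, is_face K F -> subset_of S F -> F x.

Definition face_pt (n : nat) (x : 'rV[R]_n) (K : 'rV[R]_n -> Prop) :=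
  min_face K (fun y => y = x).

Definition dual (n : nat) (K : 'rV[R]_n -> Prop) : 'rV[R]_n -> Prop :=
  fun y => forall x, K x -> 0 <= dot y x.
Definition perp (n : nat) (K : 'rV[R]_n -> Prop) : 'rV[R]_n -> Prop :=
  fun y => forall x, K x -> dot y x = 0.

Definition cut (n : nat) (K : 'rV[R]_n -> Prop) (w : 'rV[R]_n) : 'rV[R]_n -> Prop :=
  fun x => K x /\ dot w x = 0.

(* The steps are given by parameters v_i in some
   space 'rV_p; the exposing vector is g v_i, and ok v_i is the side condition
   (e.g. <v_i, b> = 0). *)
Fixpoint fr_valid (n p : nat) (g : 'rV[R]_p -> 'rV[R]_n) (ok : 'rV[R]_p -> Prop)
  (K : 'rV[R]_n -> Prop) (vs : seq 'rV[R]_p) : Prop :=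
  match vs with
  | [::] => True
  | v :: vs' => dual K (g v) /\ ~ perp K (g v) /\ ok v /\
                fr_valid g ok (cut K (g v)) vs'
  end.

Fixpoint fr_last (n p : nat) (g : 'rV[R]_p -> 'rV[R]_n)
  (K : 'rV[R]_n -> Prop) (vs : seq 'rV[R]_p) : 'rV[R]_n -> Prop :=
  match vs with
  | [::] => K
  | v :: vs' => fr_last g (cut K (g v)) vs'
  end.

Definition is_sing_deg (n p : nat) (g : 'rV[R]_p -> 'rV[R]_n) (ok : 'rV[R]_p -> Prop)
  (K target : 'rV[R]_n -> Prop) (d : nat) : Prop :=
  (exists vs, size vs = d /\ fr_valid g ok K vs /\ seteq (fr_last g K vs) target) /\
  (forall vs, fr_valid g ok K vs -> seteq (fr_last g K vs) target -> (d <= size vs)%N).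

(* L = A^*(W) = range of y |-> y *m A^T, and its orthogonal complement *)
Definition Lsp (n m : nat) (A : 'M[R]_(n, m)) : 'rV[R]_n -> Prop :=
  fun x => exists y : 'rV[R]_m, x = y *m A^T.
Definition Lperp (n m : nat) (A : 'M[R]_(n, m)) : 'rV[R]_n -> Prop :=
  perp (Lsp A).

Definition sd_null (n m : nat) (A : 'M[R]_(n, m)) (K : 'rV[R]_n -> Prop)
  (C : 'rV[R]_n) (d : nat) : Prop :=
  is_sing_deg id (fun W => Lperp A W /\ dot W C = 0) K
    (min_face K (fun Z => K Z /\ exists y : 'rV[R]_m, Z = C - y *m A^T)) d.

Definition sd_sys (n k : nat) (M : 'M[R]_(n, k)) (K : 'rV[R]_n -> Prop)
  (b : 'rV[R]_k) (d : nat) : Prop :=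
  is_sing_deg (fun v : 'rV[R]_k => v *m M^T) (fun v => dot v b = 0) K
    (min_face K (fun X => K X /\ X *m M = b)) d.

(* singularity degree of the face Gt of the cone G, where G lives in the
   subspace L^perp (the exposing vectors are taken in L^perp, i.e. in the
   quotient space E/L identified with L^perp) *)
Definition sd_face (n m : nat) (A : 'M[R]_(n, m)) (G Gt : 'rV[R]_n -> Prop)
  (d : nat) : Prop :=
  is_sing_deg id (fun D => Lperp A D /\ perp Gt D) G Gt d.

End FR.

From HB Require Import structures.
From mathcomp Require Import all_boot all_order all_algebra.
From mathcomp Require Import reals.
From mathcomp Require Import ring.
From Stdlib Require Import FunctionalExtensionality PropExtensionality.
Import Order.TTheory GRing.Theory Num.Theory.
Local Open Scope ring_scope.

Set Implicit Arguments. Unset Strict Implicit. Unset Printing Implicit Defensive.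

(* Every exposing vector allowed in either reduction lies in
   L^perp, and for W in L^perp we have <W, P x> = <W, x>.  Hence P commutes
   with every facial-reduction step: P(K cap W^perp) = P(K) cap W^perp, a
   vector exposes a face of K iff it exposes the corresponding face of P(K),
   and each reduced face of K is saturated along L (membership depends only on
   P x).  Since the feasible set is K cap (C + L) = K cap P^-1(P C), its minimal
   face is K cap P^-1(face(P C, P(K))).  A valid reduction sequence of the
   system is therefore the same thing as a valid reduction sequence of the face
   face(P C, P(K)) of P(K), ending at the right face, which gives part 1.
   For part 2, a surjective M with kernel L maps L^perp isomorphically onto the
   target space, {X in K : X M = C M} is the nullspace-form feasible set, and
   range(M^T) = L^perp, so the parameters v of the system correspond exactly
   to the exposing vectors v M^T of the nullspace form. *)

Ltac mxring := apply/rowP => ?; rewrite !mxE; ring.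

Lemma predext (T : Type) (S1 S2 : T -> Prop) : (forall x, S1 x <-> S2 x) -> S1 = S2.
Proof.
by move=> h; apply: functional_extensionality => x; apply: propositional_extensionality.
Qed.

Section InnerProduct.
Variable R : realType.

Lemma dotC n (x y : 'rV[R]_n) : dot x y = dot y x.
Proof. by rewrite /dot; apply: eq_bigr => i _; rewrite mulrC. Qed.

Lemma dotDr n (x y z : 'rV[R]_n) : dot x (y + z) = dot x y + dot x z.
Proof. by rewrite /dot -big_split; apply: eq_bigr => i _; rewrite mxE mulrDr. Qed.

Lemma dotZr n (x y : 'rV[R]_n) t : dot x (t *: y) = t * dot x y.
Proof. by rewrite /dot mulr_sumr; apply: eq_bigr => i _; rewrite mxE mulrCA. Qed.

Lemma dotNr n (x y : 'rV[R]_n) : dot x (- y) = - dot x y.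
Proof. by rewrite -scaleN1r dotZr mulN1r. Qed.

Lemma dotBr n (x y z : 'rV[R]_n) : dot x (y - z) = dot x y - dot x z.
Proof. by rewrite dotDr dotNr. Qed.

Lemma dot0r n (x : 'rV[R]_n) : dot x 0 = 0.
Proof. by rewrite -(scale0r (0 : 'rV[R]_n)) dotZr mul0r. Qed.

Lemma dotDl n (x y z : 'rV[R]_n) : dot (y + z) x = dot y x + dot z x.
Proof. by rewrite !(dotC _ x) dotDr. Qed.

Lemma dotZl n (x y : 'rV[R]_n) t : dot (t *: y) x = t * dot y x.
Proof. by rewrite !(dotC _ x) dotZr. Qed.

Lemma dotNl n (x y : 'rV[R]_n) : dot (- y) x = - dot y x.
Proof. by rewrite !(dotC _ x) dotNr. Qed.

Lemma dot_self0 n (v : 'rV[R]_n) : dot v v = 0 -> v = 0.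
Proof.
move=> h; apply/rowP => i; rewrite mxE.
have := @psumr_eq0P R _ predT (fun i => v ord0 i * v ord0 i).
move=> /(_ (fun i _ => sqr_ge0 (v ord0 i))) /(_ h i isT).
by move/eqP; rewrite mulf_eq0 orbb => /eqP.
Qed.

Lemma dot_adjoint n k (u : 'rV[R]_n) (B : 'M[R]_(k, n)) (x : 'rV[R]_k) :
  dot (u *m B^T) x = dot u (x *m B).
Proof.
have dotE p (a b : 'rV[R]_p) : dot a b = (a *m b^T) ord0 ord0.
  by rewrite /dot !mxE; apply: eq_bigr => i _; rewrite mxE.
rewrite dotC !dotE.
have -> : u *m (x *m B)^T = (x *m B *m u^T)^T by rewrite !trmx_mul trmxK.
by rewrite [in RHS]mxE trmx_mul trmxK mulmxA.
Qed.

End InnerProduct.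

Section Projection.
Variables (R : realType) (n m : nat) (A : 'M[R]_(n, m)).

Lemma LspD x y : Lsp A x -> Lsp A y -> Lsp A (x + y).
Proof. by move=> [a ->] [b ->]; exists (a + b); rewrite mulmxDl. Qed.

Lemma LspN x : Lsp A x -> Lsp A (- x).
Proof. by move=> [a ->]; exists (- a); rewrite mulNmx. Qed.

Lemma LspB x y : Lsp A x -> Lsp A y -> Lsp A (x - y).
Proof. by move=> hx hy; apply: LspD => //; apply: LspN. Qed.

Lemma LspZ t x : Lsp A x -> Lsp A (t *: x).
Proof. by move=> [a ->]; exists (t *: a); rewrite scalemxAl. Qed.

Lemma LperpD x y : Lperp A x -> Lperp A y -> Lperp A (x + y).
Proof. by move=> hx hy z hz; rewrite dotDl hx // hy // addr0. Qed.

Lemma LperpB x y : Lperp A x -> Lperp A y -> Lperp A (x - y).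
Proof. by move=> hx hy; apply: LperpD => // z hz; rewrite dotNl hy // oppr0. Qed.

Lemma LperpZ t x : Lperp A x -> Lperp A (t *: x).
Proof. by move=> hx z hz; rewrite dotZl hx // mulr0. Qed.

Lemma Lsp_Lperp0 x : Lsp A x -> Lperp A x -> x = 0.
Proof. by move=> h1 h2; apply: dot_self0; apply: h2. Qed.

Variable P : 'rV[R]_n -> 'rV[R]_n.
Hypothesis HP : forall x, Lperp A (P x) /\ Lsp A (x - P x).

Lemma P_unique x u : Lperp A u -> Lsp A (x - u) -> P x = u.
Proof.
move=> hu hxu; have [hPx hxPx] := HP x; apply/eqP; rewrite -subr_eq0; apply/eqP.
apply: Lsp_Lperp0; last exact: LperpB.
have -> : P x - u = (x - u) - (x - P x) by mxring.
by apply: LspB.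
Qed.

Lemma PD x y : P (x + y) = P x + P y.
Proof.
have [hPx hxPx] := HP x; have [hPy hyPy] := HP y.
apply: P_unique; first exact: LperpD.
have -> : x + y - (P x + P y) = (x - P x) + (y - P y) by mxring.
by apply: LspD.
Qed.

Lemma PZ t x : P (t *: x) = t *: P x.
Proof.
have [hPx hxPx] := HP x.
by apply: P_unique; [apply: LperpZ | rewrite -scalerBr; apply: LspZ].
Qed.

Lemma P_eq x z : P x = P z <-> Lsp A (x - z).
Proof.
have [hPx hxPx] := HP x; have [hPz hzPz] := HP z.
split=> [e | h].
  have -> : x - z = (x - P x) - (z - P z) by rewrite e; mxring.
  by apply: LspB.
apply: P_unique => //.
have -> : x - P z = (x - z) + (z - P z) by mxring.
by apply: LspD.
Qed.

Lemma dotP W x : Lperp A W -> dot W (P x) = dot W x.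
Proof.
move=> hW; apply/eqP; rewrite -subr_eq0 -dotBr; apply/eqP.
have -> : P x - x = - (x - P x) by mxring.
by apply: hW; apply: LspN; case: (HP x).
Qed.

End Projection.

Section Faces.
Variable R : realType.

Lemma face_refl n (K : 'rV[R]_n -> Prop) : convex_cone K -> is_face K K.
Proof. by move=> hK; split. Qed.

Lemma face_cut n (K G : 'rV[R]_n -> Prop) W :
  is_face K G -> dual G W -> is_face K (cut G W).
Proof.
move=> [hGK [[hG0 [hGD hGZ]] hGf]] hW; split; first by move=> x [/hGK].
split; first split.
- by split => //; rewrite dot0r.
- split=> [x y [gx wx] [gy wy] | t x ht [gx wx]].
    by split; [exact: hGD | rewrite dotDr wx wy addr0].
  by split; [exact: hGZ | rewrite dotZr wx mulr0].
- move=> x y kx ky [gxy wxy]; have [gx gy] := hGf _ _ kx ky gxy.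
  have hx := hW _ gx; have hy := hW _ gy; rewrite dotDr in wxy.
  have ex : dot W x = 0 by apply/eqP; rewrite eq_le hx andbT -wxy lerDl.
  by split; split => //; move: wxy; rewrite ex add0r.
Qed.

Lemma min_face_face n (K S : 'rV[R]_n -> Prop) : convex_cone K -> is_face K (min_face K S).
Proof.
move=> [hK0 [hKD hKZ]]; split; first by move=> x [].
split; first split.
- by split=> // F [_ [[]]].
- split=> [x y [kx fx] [ky fy] | t x ht [kx fx]].
    split=> [|F hF hS]; first exact: hKD.
    by have [_ [[_ [hFD _]] _]] := hF; apply: hFD; [exact: fx | exact: fy].
  split=> [|F hF hS]; first exact: hKZ.
  by have [_ [[_ [_ hFZ]] _]] := hF; apply: hFZ => //; exact: fx.
- move=> x y kx ky [kxy fxy]; split; split => // F hF hS;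
  by case: hF => h1 [h2 h3]; have [] := h3 _ _ kx ky (fxy F (conj h1 (conj h2 h3)) hS).
Qed.

Lemma min_face_sub n (K S F : 'rV[R]_n -> Prop) :
  is_face K F -> subset_of S F -> subset_of (min_face K S) F.
Proof. by move=> hF hS x [_ h]; apply: h. Qed.

Lemma face_pt_self n (K : 'rV[R]_n -> Prop) x : K x -> face_pt x K x.
Proof. by move=> kx; split => // F _; apply. Qed.

Lemma face_pt_dominated n (K : 'rV[R]_n -> Prop) c z :
  convex_cone K -> K c -> face_pt c K z -> exists t, 0 <= t /\ K (t *: c - z).
Proof.
move=> [hK0 [hKD hKZ]] hc.
pose D := fun x => K x /\ exists t, 0 <= t /\ K (t *: c - x).
have hD : is_face K D.
  split; first by move=> x [].
  split; first split.
  - by split => //; exists 0; rewrite scale0r subr0.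
  - split=> [x y [kx [t1 [ht1 h1]]] [ky [t2 [ht2 h2]]] | s x hs [kx [t [ht h]]]].
      split; first exact: hKD.
      exists (t1 + t2); split; first exact: addr_ge0.
      have -> : (t1 + t2) *: c - (x + y) = (t1 *: c - x) + (t2 *: c - y) by mxring.
      exact: hKD.
    split; first exact: hKZ.
    exists (s * t); split; first exact: mulr_ge0.
    have -> : (s * t) *: c - s *: x = s *: (t *: c - x) by mxring.
    exact: hKZ.
  - move=> x y kx ky [_ [t [ht h]]]; split; split => //; exists t; split => //.
      have -> : t *: c - x = (t *: c - (x + y)) + y by mxring.
      exact: hKD.
    have -> : t *: c - y = (t *: c - (x + y)) + x by mxring.
    exact: hKD.
have hcD : subset_of (fun x => x = c) D.
  by move=> x ->; split => //; exists 1; rewrite scale1r subrr.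
by move=> /(min_face_sub hD hcD) [].
Qed.

Section LinearImage.
Variables (n p : nat) (f : 'rV[R]_n -> 'rV[R]_p).
Hypothesis fD : forall x y, f (x + y) = f x + f y.
Hypothesis fZ : forall t x, f (t *: x) = t *: f x.

Lemma linear_image0 : f 0 = 0.
Proof. by rewrite -(scale0r (0 : 'rV[R]_n)) fZ scale0r. Qed.

Lemma img_cone K : convex_cone K -> convex_cone (img f K).
Proof.
case=> h0 [hD hZ]; split; first by exists 0; rewrite linear_image0.
split=> [_ _ [x [kx ->]] [y [ky ->]] | t _ ht [x [kx ->]]].
  by exists (x + y); rewrite fD; split => //; apply: hD.
by exists (t *: x); rewrite fZ; split => //; apply: hZ.
Qed.

Lemma face_preimage K G :
  convex_cone K -> is_face (img f K) G -> is_face K (fun x => K x /\ G (f x)).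
Proof.
case=> hK0 [hKD hKZ] [_ [[hG0 [hGD hGZ]] hGf]].
split; first by move=> y [].
split; first split.
- by split => //; rewrite linear_image0.
- split=> [a b [ka ga] [kb gb] | t a ht [ka ga]].
    by split; [exact: hKD | rewrite fD; apply: hGD].
  by split; [exact: hKZ | rewrite fZ; apply: hGZ].
- move=> a b ka kb [_ gab]; rewrite fD in gab.
  have [ga gb] := hGf _ _ (ex_intro _ a (conj ka erefl)) (ex_intro _ b (conj kb erefl)) gab.
  by split; split.
Qed.

End LinearImage.

End Faces.

Section SingularityDegree.
Variable R : realType.

Lemma fr_last_map n p (g : 'rV[R]_p -> 'rV[R]_n) K vs :
  fr_last g K vs = fr_last id K (map g vs).
Proof. by elim: vs K => [|v vs IH] K //=; rewrite IH. Qed.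

Lemma fr_valid_map n p (g : 'rV[R]_p -> 'rV[R]_n) ok ok' K vs :
  (forall v, ok v <-> ok' (g v)) ->
  fr_valid g ok K vs <-> fr_valid id ok' K (map g vs).
Proof.
move=> hok; elim: vs K => [|v vs IH] K //=.
by rewrite (IH (cut K (g v))) (hok v).
Qed.

Lemma sing_deg_transfer n p (g g' : 'rV[R]_p -> 'rV[R]_n) ok ok' K K' T T' d :
  (forall vs, fr_valid g ok K vs <-> fr_valid g' ok' K' vs) ->
  (forall vs, fr_valid g ok K vs ->
     seteq (fr_last g K vs) T <-> seteq (fr_last g' K' vs) T') ->
  is_sing_deg g ok K T d <-> is_sing_deg g' ok' K' T' d.
Proof.
move=> hv hl; split => -[[vs [hs [hvs hls]]] hmin]; split.
- by exists vs; split => //; split; [apply/hv | apply/hl].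
- move=> ws hw hwl; have hw' := proj2 (hv ws) hw.
  by apply: hmin => //; apply/(hl _ hw').
- have hvs' := proj2 (hv vs) hvs.
  by exists vs; split => //; split => //; apply/(hl _ hvs').
- by move=> ws hw hwl; apply: hmin; [apply/hv | apply/(hl _ hw)].
Qed.

Lemma sing_deg_reparam n p (g : 'rV[R]_p -> 'rV[R]_n) ok ok' K T d :
  (forall v, ok v <-> ok' (g v)) ->
  (forall W, ok' W -> exists v, W = g v) ->
  is_sing_deg g ok K T d <-> is_sing_deg id ok' K T d.
Proof.
move=> hok hrange.
have lift ws K' : fr_valid id ok' K' ws -> exists vs, ws = map g vs.
  elim: ws K' => [|W ws IH] K' /=; first by exists [::].
  move=> [_ [_ [hW hv]]]; have [vs ->] := IH _ hv.
  by have [v ->] := hrange _ hW; exists (v :: vs).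
have hv vs := fr_valid_map K vs hok.
split => -[[vs [hs [hvs hls]]] hmin]; split.
- exists (map g vs); rewrite size_map -fr_last_map.
  by split => //; split => //; apply/hv.
- move=> ws hw hwl; have [vs' ews] := lift _ _ hw; subst ws.
  by rewrite size_map; apply: hmin; [apply/hv | rewrite fr_last_map].
- have [vs' ews] := lift _ _ hvs; subst vs; rewrite size_map in hs.
  by exists vs'; split => //; split; [apply/hv | rewrite fr_last_map].
- move=> vs' hv' hl'; rewrite -(size_map g).
  by apply: hmin; [apply/hv | rewrite -fr_last_map].
Qed.

End SingularityDegree.

Section QuotientCone.
Variables (R : realType) (n m : nat) (A : 'M[R]_(n, m)).
Variables (K : 'rV[R]_n -> Prop) (C : 'rV[R]_n) (P : 'rV[R]_n -> 'rV[R]_n).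
Hypothesis HK : convex_cone K.
Hypothesis Hfeas : exists Z, K Z /\ exists y : 'rV[R]_m, Z = C - y *m A^T.
Hypothesis HP : forall x, Lperp A (P x) /\ Lsp A (x - P x).

Let PK := img P K.
Let G := face_pt (P C) PK.
Let Feas := fun Z => K Z /\ exists y : 'rV[R]_m, Z = C - y *m A^T.
Let okN := fun W => Lperp A W /\ dot W C = 0.
Let okF := fun D => Lperp A D /\ perp G D.

Lemma PK_cone : convex_cone PK.
Proof. exact: (img_cone (PD HP) (PZ HP) HK). Qed.

Lemma Feas_P Z : K Z -> (Feas Z <-> P Z = P C).
Proof.
move=> kZ; rewrite (P_eq HP); split=> [[_ [y ->]] | [y ey]].
  by exists (- y); rewrite mulNmx; mxring.
by split => //; exists (- y); rewrite mulNmx -ey; mxring.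
Qed.

Lemma PC_PK : PK (P C).
Proof. by case: Hfeas => Z [kZ hZ]; exists Z; split => //; apply/esym/(Feas_P kZ). Qed.

Lemma img_cut K' W : Lperp A W -> img P (cut K' W) = cut (img P K') W.
Proof.
move=> hW; apply: predext => y; split.
- by move=> [x [[kx wx] ->]]; split; [exists x | rewrite (dotP HP)].
- by move=> [[x [kx ->]] wx]; exists x; split => //; split => //; rewrite -(dotP HP).
Qed.

Lemma dual_img K' W : Lperp A W -> dual (img P K') W <-> dual K' W.
Proof.
move=> hW; split=> [h x kx | h _ [x [kx ->]]]; last by rewrite (dotP HP) //; apply: h.
by rewrite -(dotP HP) //; apply: h; exists x.
Qed.

Lemma perp_img K' W : Lperp A W -> perp (img P K') W <-> perp K' W.
Proof.
move=> hW; split=> [h x kx | h _ [x [kx ->]]]; last by rewrite (dotP HP) //; apply: h.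
by rewrite -(dotP HP) //; apply: h; exists x.
Qed.

Lemma last_img (ok : 'rV[R]_n -> Prop) vs : (forall W, ok W -> Lperp A W) ->
  forall K', fr_valid id ok K' vs -> fr_last id (img P K') vs = img P (fr_last id K' vs).
Proof.
move=> hok; elim: vs => [|W vs IH] K' //= [_ [_ [hW hv]]].
by rewrite -img_cut; [exact: IH | exact: hok].
Qed.

(* A step is valid for the system iff it is valid for the face G of P(K):
   along the way, the current face of P(K) contains P C, so a vector W
   exposing it vanishes on G iff <W, C> = 0. *)
Lemma valid_equiv vs : forall K', is_face PK (img P K') -> img P K' (P C) ->
  (fr_valid id okN K' vs <-> fr_valid id okF (img P K') vs).
Proof.
elim: vs => [|W vs IH] K' hF hC //=.
split=> -[hd [hp [[hL hW] hv]]].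
- have hd' : dual (img P K') W by rewrite dual_img.
  have hcut : is_face PK (cut (img P K') W) by apply: face_cut.
  have hCc : cut (img P K') W (P C) by split => //; rewrite (dotP HP).
  split => //; split; first by rewrite perp_img.
  split; last by rewrite -img_cut // -IH // img_cut.
  split => // x gx.
  by have [] := min_face_sub hcut (S := fun y => y = P C) (fun y e => eq_ind_r _ hCc e) gx.
- have hWC : dot W C = 0.
    by rewrite -(dotP HP) //; apply: hW; exact: face_pt_self PC_PK.
  have hcut : is_face PK (cut (img P K') W) by apply: face_cut.
  have hCc : cut (img P K') W (P C) by split => //; rewrite (dotP HP).
  split; first by rewrite -dual_img.
  split; first by rewrite -perp_img.
  by split => //; rewrite IH img_cut.
Qed.

Lemma last_saturated vs : forall K', fr_valid id okN K' vs ->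
  subset_of (fr_last id K' vs) K' /\
  (forall x z, K' x -> P x = P z -> fr_last id K' vs z -> fr_last id K' vs x).
Proof.
elim: vs => [|W vs IH] K' /=; first by move=> _; split => // x z kx.
move=> [_ [_ [[hL _] hv]]]; have [h1 h2] := IH _ hv.
split=> [x hx | x z kx e hz]; first exact: (proj1 (h1 x hx)).
apply: (h2 x z) => //; split => //.
have [kz wz] : cut K' W z := h1 _ hz.
by rewrite -(dotP HP) // e (dotP HP).
Qed.

Lemma min_face_feas : seteq (min_face K Feas) (fun x => K x /\ G (P x)).
Proof.
move=> x; split=> [hx | [kx gx]].
  have hG : is_face PK G by apply: min_face_face PK_cone.
  have hpre := face_preimage (PD HP) (PZ HP) HK hG.
  apply: (min_face_sub hpre _ hx) => Z hZ; have [kZ _] := hZ; split => //.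
  by rewrite (proj1 (Feas_P kZ) hZ); apply: face_pt_self PC_PK.
split => // F [hFK [[hF0 [hFD hFZ]] hFf]] hS.
have [t [ht [w [kw ew]]]] := face_pt_dominated PK_cone PC_PK gx.
have [Z0 [kZ0 hZ0]] := Hfeas; have PZ0 := proj1 (Feas_P kZ0) (conj kZ0 hZ0).
have [hK0 [hKD hKZ]] := HK.
have ht1 : 0 < t + 1 by rewrite ltr_wpDl.
set s := (t + 1)^-1; have hs : 0 <= s by rewrite invr_ge0 ltW.
(* s (x + w + Z0) is feasible, hence in F; F being a face, so is s x. *)
have hsu : F (s *: x + s *: (w + Z0)).
  rewrite -scalerDr; have kxwZ := hKD _ _ kx (hKD _ _ kw kZ0).
  apply: hS; apply/Feas_P; first exact: hKZ.
  rewrite (PZ HP) !(PD HP) -ew PZ0.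
  have -> : P x + (t *: P C - P x + P C) = (t + 1) *: P C by mxring.
  by rewrite scalerA mulVf ?scale1r // gt_eqF.
have [fsx _] := hFf _ _ (hKZ _ _ hs kx) (hKZ _ _ hs (hKD _ _ kw kZ0)) hsu.
have -> : x = (t + 1) *: (s *: x) by rewrite scalerA divff ?scale1r // gt_eqF.
by apply: hFZ => //; apply: ltW.
Qed.

Lemma reaches_equiv vs : fr_valid id okN K vs ->
  (seteq (fr_last id K vs) (min_face K Feas) <-> seteq (fr_last id PK vs) G).
Proof.
move=> hv; rewrite /PK (last_img (ok := okN)) //; last by move=> W [].
have [h1 h2] := last_saturated hv; set H := fr_last id K vs.
split => h y.
- split=> [[z [hz ->]] | gy]; first by have /min_face_feas [] := proj1 (h z) hz.
  have [[x [kx ey]] _] : PK y /\ _ := gy.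
  by subst y; exists x; split => //; apply/h/min_face_feas.
- split=> [hy | /min_face_feas [ky gy]].
    by apply/min_face_feas; split; [exact: h1 | apply/h; exists y].
  have [z [hz ez]] := proj2 (h (P y)) gy.
  exact: (h2 y z ky ez hz).
Qed.

Lemma sd_null_face d : sd_null A K C d <-> sd_face A PK G d.
Proof.
apply: sing_deg_transfer; last exact: reaches_equiv.
by move=> vs; apply: valid_equiv; [exact: face_refl PK_cone | exact: PC_PK].
Qed.

End QuotientCone.

Section KernelMap.
Variables (R : realType) (n m k : nat) (A : 'M[R]_(n, m)) (M : 'M[R]_(n, k)).
Hypothesis Hsurj : forall f : 'rV[R]_k, exists x, x *m M = f.
Hypothesis Hker : forall x, x *m M = 0 <-> Lsp A x.

Lemma M_eq x y : x *m M = y *m M <-> Lsp A (x - y).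
Proof.
by rewrite -Hker mulmxBl; split=> [-> | /eqP]; [rewrite subrr | rewrite subr_eq0 => /eqP].
Qed.

Lemma quotient_iso (P : 'rV[R]_n -> 'rV[R]_n) (K : 'rV[R]_n -> Prop) :
  (forall x, Lperp A (P x) /\ Lsp A (x - P x)) ->
  (forall x, P x *m M = x *m M) /\
  (forall x y, Lperp A x -> Lperp A y -> x *m M = y *m M -> x = y) /\
  (forall f : 'rV[R]_k, exists x, Lperp A x /\ x *m M = f) /\
  seteq (img (fun x => x *m M) (img P K)) (img (fun x => x *m M) K).
Proof.
move=> HP; have PM x : P x *m M = x *m M.
  by apply/M_eq; rewrite -opprB; apply: LspN; case: (HP x).
split=> //; split.
  move=> x y hx hy /M_eq e; apply/eqP; rewrite -subr_eq0; apply/eqP.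
  exact: (Lsp_Lperp0 e (LperpB hx hy)).
split=> [f | y].
  by have [x hx] := Hsurj f; exists (P x); rewrite PM; split => //; case: (HP x).
split=> [[_ [[z [kz ->]] ->]] | [z [kz ->]]]; first by exists z; rewrite PM.
by exists (P z); split; [exists z | rewrite PM].
Qed.

Lemma Lperp_range W : Lperp A W <-> exists v, W = v *m M^T.
Proof.
split=> [hW | [v ->] x /Hker hx]; last by rewrite dot_adjoint hx dot0r.
have hs j : exists x : 'rV[R]_n, x *m M == (delta_mx 0 j : 'rV[R]_k).
  by have [x hx] := Hsurj (delta_mx 0 j); exists x; rewrite hx.
pose N : 'M[R]_(k, n) := \matrix_(j < k) xchoose (hs j).
have NM : N *m M = 1%:M.
  apply/row_matrixP => j; rewrite row_mul rowK row1.
  exact: (eqP (xchooseP (hs j))).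
(* W B^T = W - (W N^T) M^T with B = 1 - M N, and B maps into L *)
exists (W *m N^T).
set B : 'M[R]_n := 1%:M - M *m N.
have hB (x : 'rV[R]_n) : dot (W *m B^T) x = 0.
  rewrite dot_adjoint; apply: hW; apply/Hker.
  by rewrite /B mulmxBr mulmx1 mulmxBl -!mulmxA NM mulmx1 subrr.
have := dot_self0 (hB (W *m B^T)).
rewrite /B raddfB /= trmx1 trmx_mul mulmxBr mulmx1 mulmxA.
by move/eqP; rewrite subr_eq0 => /eqP.
Qed.

Lemma feas_by_M (K : 'rV[R]_n -> Prop) (C : 'rV[R]_n) :
  (fun X => K X /\ X *m M = C *m M) =
  (fun Z => K Z /\ exists y : 'rV[R]_m, Z = C - y *m A^T).
Proof.
apply: predext => X; rewrite M_eq; split=> -[kX [y ey]]; split => //.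
  by exists (- y); rewrite mulNmx -ey; mxring.
by exists (- y); rewrite mulNmx ey; mxring.
Qed.

Lemma sd_sys_null (K : 'rV[R]_n -> Prop) (C : 'rV[R]_n) d :
  sd_sys M K (C *m M) d <-> sd_null A K C d.
Proof.
rewrite /sd_sys /sd_null feas_by_M; apply: sing_deg_reparam => [v | W [/Lperp_range hW _]] //.
by rewrite dot_adjoint; split=> [h | [] //]; split => //; apply/Lperp_range; exists v.
Qed.

End KernelMap.

Theorem mainTheorem7 (R : realType) (n m : nat) (A : 'M[R]_(n, m))
  (K : 'rV[R]_n -> Prop) (C : 'rV[R]_n) (P : 'rV[R]_n -> 'rV[R]_n) :
  convex_cone K ->
  (exists Z, K Z /\ exists y : 'rV[R]_m, Z = C - y *m A^T) ->
  (* P is the orthogonal projection of E onto L^perp *)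
  (forall x, Lperp A (P x) /\ Lsp A (x - P x)) ->
  (forall d, sd_null A K C d <-> sd_face A (img P K) (face_pt (P C) (img P K)) d) /\
  (forall (k : nat) (M : 'M[R]_(n, k)),
     (forall f : 'rV[R]_k, exists x, x *m M = f) ->
     (forall x, x *m M = 0 <-> Lsp A x) ->
     (* M induces an isomorphism of K/L (represented by P(K) in L^perp) onto M(K) *)
     ((forall x, P x *m M = x *m M) /\
      (forall x y, Lperp A x -> Lperp A y -> x *m M = y *m M -> x = y) /\
      (forall f : 'rV[R]_k, exists x, Lperp A x /\ x *m M = f) /\
      seteq (img (fun x => x *m M) (img P K)) (img (fun x => x *m M) K)) /\
     (forall d, sd_face A (img P K) (face_pt (P C) (img P K)) d <->
                sd_sys M K (C *m M) d)).
Proof.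
move=> HK Hfeas HP.
have part1 d := sd_null_face HK Hfeas HP d.
split=> // k M Hsurj Hker; split; first exact: quotient_iso.
move=> d; apply: iff_trans (iff_sym (part1 d)) _.
exact: iff_sym (sd_sys_null Hsurj Hker K C d).
Qed.
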